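(* Let $K$ be any field, $m\ge 2$ an integer, $R=K[x_1,\dots,x_{3m+3}]$, and for $n=1,\dots,m$ set $s_n=x_{3n-2}x_{3n+2}$, $t_n=x_{3n+1}x_{3n+3}$, $u_n=x_{3n+1}x_{3n+2}$, $v_n=x_{3n-1}x_{3n+3}$, and $r_1=x_1x_2$. Let $I_m=(r_1, s_n,t_n,u_n,v_n : 1\le n\le m)$ and $J_m=(x_1x_2,\ s_n+t_n,\ u_n+v_n : 1\le n\le m)$. Then $I_m=\sqrt{J_m}$. *)

From mathcomp Require Import all_boot all_algebra.
From mathcomp Require Import mpoly.
Set Implicit Arguments. Unset Strict Implicit. Unset Printing Implicit Defensive.
Import GRing.Theory.
Local Open Scope ring_scope.

(* The polynomial ring R = K[x_1,...,x_{3m+3}] is {mpoly K[(3*m).+3]};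
   the paper's variable x_j (1 <= j <= 3m+3) is 'X_(j-1). *)
Definition Rm (K : fieldType) (m : nat) := {mpoly K[(3 * m).+3]}.

Definition xv (K : fieldType) (m : nat) (j : nat) : Rm K m :=
  'X_(inord j.-1).

Definition in_ideal (R : comRingType) (gs : seq R) (f : R) : Prop :=
  exists c : 'I_(size gs) -> R, f = \sum_(i < size gs) c i * gs`_i.

Definition in_radical (R : comRingType) (gs : seq R) (f : R) : Prop :=
  exists k : nat, in_ideal gs (f ^+ k).

Section Gens.
Variables (K : fieldType) (m : nat).
Local Notation x := (xv K m).
Definition r1 : Rm K m := x 1 * x 2.
Definition s_ (n : nat) : Rm K m := x (3*n-2) * x (3*n+2).
Definition t_ (n : nat) : Rm K m := x (3*n+1) * x (3*n+3).
Definition u_ (n : nat) : Rm K m := x (3*n+1) * x (3*n+2).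
Definition v_ (n : nat) : Rm K m := x (3*n-1) * x (3*n+3).

Definition I_gens : seq (Rm K m) :=
  r1 :: flatten [seq [:: s_ n; t_ n; u_ n; v_ n] | n <- iota 1 m].
Definition J_gens : seq (Rm K m) :=
  x 1 * x 2 :: flatten [seq [:: s_ n + t_ n; u_ n + v_ n] | n <- iota 1 m].
End Gens.

From mathcomp Require Import all_boot all_algebra.
From mathcomp Require Import mpoly.
From mathcomp Require Import ring zify.
Set Implicit Arguments. Unset Strict Implicit. Unset Printing Implicit Defensive.
Import GRing.Theory.
Local Open Scope ring_scope.

(* Put w_n := x_(3n+1) x_(3n+2), so that w_0 = r_1 and w_m = u_m.  At level n,
   write a, b, c, d, e for x_(3n-2), x_(3n-1), x_(3n+1), x_(3n+2), x_(3n+3):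
   then w_(n-1) = ab, the generators of J_m are ad + ce and cd + be, and the
   square of each of ad = s_n, ce = t_n, cd = u_n, be = v_n lies in
   (ab, ad + ce, cd + be).  Induction on n puts every generator of I_m in
   sqrt(J_m).
   Conversely J_m is contained in I_m, which is the edge ideal of a loopless
   graph and hence radical: a monomial outside it is supported on an
   independent set S, and killing the variables outside S annihilates I_m and
   preserves the coefficient of that monomial, so f^k in I_m forces f|_S = 0
   in the domain K[x]. *)

Section IdealMembership.
Variables (R : comNzRingType) (gs : seq R).

Lemma in_ideal0 : in_ideal gs 0.
Proof. by exists (fun _ => 0); rewrite big1 // => i _; rewrite mul0r. Qed.

Lemma in_idealD f g : in_ideal gs f -> in_ideal gs g -> in_ideal gs (f + g).
Proof.
move=> [c1 ->] [c2 ->]; exists (fun i => c1 i + c2 i).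
by rewrite -big_split /=; apply: eq_bigr => i _; rewrite mulrDl.
Qed.

Lemma in_idealM a f : in_ideal gs f -> in_ideal gs (a * f).
Proof.
move=> [c ->]; exists (fun i => a * c i).
by rewrite mulr_sumr; apply: eq_bigr => i _; rewrite mulrA.
Qed.

Lemma in_idealMr a f : in_ideal gs f -> in_ideal gs (f * a).
Proof. by move=> h; rewrite mulrC; apply: in_idealM. Qed.

Lemma in_ideal_sum (I : Type) (r : seq I) (P : pred I) (F : I -> R) :
  (forall i, P i -> in_ideal gs (F i)) -> in_ideal gs (\sum_(i <- r | P i) F i).
Proof. by move=> h; apply: big_ind => //; [exact: in_ideal0 | exact: in_idealD]. Qed.

Lemma in_ideal_mem g : g \in gs -> in_ideal gs g.
Proof.
move=> hg; have hlt : (index g gs < size gs)%N by rewrite index_mem.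
exists (fun i : 'I_(size gs) => ((i : nat) == index g gs)%:R).
rewrite (bigD1 (Ordinal hlt)) //= eqxx mul1r nth_index // big1 ?addr0 //.
move=> i hi; suff /negbTE -> : (i : nat) != index g gs by rewrite mul0r.
by apply: contra hi => /eqP h; apply/eqP/val_inj.
Qed.

Lemma in_ideal_ind (P : R -> Prop) f :
  P 0 -> (forall x y, P x -> P y -> P (x + y)) -> (forall a x, P x -> P (a * x)) ->
  {in gs, forall g, P g} -> in_ideal gs f -> P f.
Proof.
move=> P0 PD PM Pg [c ->]; apply: (big_ind P) => // i _.
by apply: PM; apply: Pg; apply: mem_nth.
Qed.

Lemma in_radical0 : in_radical gs 0.
Proof. by exists 1%N; rewrite expr1; apply: in_ideal0. Qed.

Lemma in_radicalD f g : in_radical gs f -> in_radical gs g -> in_radical gs (f + g).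
Proof.
move=> [a ha] [b hb]; exists (a + b)%N; rewrite exprDn.
apply: in_ideal_sum => i _; rewrite -mulr_natr; apply: in_idealMr.
have [hi|hi] := leqP b i.
  by rewrite -(subnK hi) exprD mulrA; apply: in_idealM.
have -> : (a + b - i = a + b - i - a + a)%N by lia.
by rewrite exprD -mulrA mulrC -mulrA; apply: in_idealMr.
Qed.

Lemma in_radicalM a f : in_radical gs f -> in_radical gs (a * f).
Proof. by move=> [k hk]; exists k; rewrite exprMn; apply: in_idealM. Qed.

Lemma in_ideal_radical f : in_ideal gs f -> in_radical gs f.
Proof. by exists 1%N; rewrite expr1. Qed.

Lemma in_radicalX f k : in_radical gs (f ^+ k) -> in_radical gs f.
Proof. by move=> [j hj]; exists (k * j)%N; rewrite exprM. Qed.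

End IdealMembership.

Lemma in_radical_of_ideal (R : comNzRingType) (gs hs : seq R) f :
  {in gs, forall g, in_radical hs g} -> in_ideal gs f -> in_radical hs f.
Proof.
apply: in_ideal_ind;
  [exact: in_radical0 | exact: in_radicalD | exact: in_radicalM].
Qed.

Lemma in_radical_trans (R : comNzRingType) (gs hs : seq R) f :
  {in gs, forall g, in_radical hs g} -> in_radical gs f -> in_radical hs f.
Proof.
move=> hgs [k hk]; apply: (in_radicalX (k := k)).
exact: in_radical_of_ideal hgs hk.
Qed.

(* Each of the four products squared is a combination of the hypotheses, e.g.
   (ad)^2 = ad (ad + ce) - ae (cd + be) + e^2 (ab). *)
Lemma in_radical_cross_terms (R : comNzRingType) (gs : seq R) (a b c d e : R) :
  in_radical gs (a * b) -> in_radical gs (a * d + c * e) ->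
  in_radical gs (c * d + b * e) ->
  [/\ in_radical gs (a * d), in_radical gs (c * e),
      in_radical gs (c * d) & in_radical gs (b * e)].
Proof.
move=> hab hp hq.
have sq_comb z u1 u2 u3 :
    z ^+ 2 = u1 * (a * d + c * e) + u2 * (c * d + b * e) + u3 * (a * b) ->
    in_radical gs z.
  move=> hz; apply: (in_radicalX (k := 2)); rewrite hz.
  by apply: in_radicalD; [apply: in_radicalD|]; apply: in_radicalM.
split.
- by apply: (sq_comb _ (a * d) (- (a * e)) (e * e)); ring.
- by apply: (sq_comb _ (c * e) (- (a * e)) (e * e)); ring.
- by apply: (sq_comb _ (- (b * d)) (c * d) (d * d)); ring.
- by apply: (sq_comb _ (- (b * d)) (b * e) (d * d)); ring.
Qed.

Section SupportSubstitution.
Variables (K : fieldType) (n : nat).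
Implicit Types (mu : 'X_{1..n}) (p : {mpoly K[n]}).

Definition supp_subst mu : n.-tuple {mpoly K[n]} :=
  [tuple if (0 < mu i)%N then 'X_i else 0 | i < n].

Lemma supp_substX mu i :
  'X_i \mPo supp_subst mu = if (0 < mu i)%N then 'X_i else 0.
Proof. by rewrite comp_mpolyXU -tnth_nth tnth_mktuple. Qed.

(* A monomial survives the substitution iff its support lies in that of mu. *)
Lemma mcoeff_supp_subst mu p : (p \mPo supp_subst mu)@_mu = p@_mu.
Proof.
rewrite comp_mpolyEX [in RHS](mpolyE p) !raddf_sum /=; apply: eq_bigr => nu _.
rewrite !mcoeffZ; congr (_ * _); rewrite comp_mpolyX.
have [hsub|] := boolP [forall i, (0 < nu i)%N ==> (0 < mu i)%N].
  rewrite [in RHS]mpolyXE_id; congr (_ @_ _); apply: eq_bigr => i _.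
  rewrite tnth_mktuple; have := forallP hsub i.
  by case: (0 < mu i)%N; case: (nu i) => [|k] //= _; rewrite !expr0.
move=> /forallPn[i]; rewrite negb_imply => /andP[hnu hmu].
rewrite (bigD1 i) //= tnth_mktuple (negbTE hmu) expr0n.
rewrite (_ : (nu i == 0%N) = false); last by case: (nu i) hnu.
rewrite mul0r mcoeff0 mcoeffX; case: eqP => // nu_mu.
by rewrite -nu_mu hnu in hmu.
Qed.

End SupportSubstitution.

Section EdgeIdeal.
Variables (K : fieldType) (n : nat) (E : seq ('I_n * 'I_n)).
Hypothesis loopless : {in E, forall e, e.1 != e.2}.

Definition edge_gens : seq {mpoly K[n]} := [seq 'X_e.1 * 'X_e.2 | e <- E].

Definition edge_covered (mu : 'X_{1..n}) :=
  has (fun e : 'I_n * 'I_n => (0 < mu e.1)%N && (0 < mu e.2)%N) E.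

Lemma supp_subst_edge_ideal mu g :
  ~~ edge_covered mu -> in_ideal edge_gens g -> g \mPo supp_subst K mu = 0.
Proof.
move=> /hasPn uncov.
apply: (in_ideal_ind (P := fun g => g \mPo supp_subst K mu = 0)) => [|y z hy hz|a y hy|].
- exact: raddf0.
- by rewrite raddfD /= hy hz addr0.
- by rewrite rmorphM /= hy mulr0.
move=> _ /mapP[e /uncov he ->]; rewrite rmorphM /= !supp_substX.
by move: he; case: (0 < mu e.1)%N; case: (0 < mu e.2)%N; rewrite ?mul0r ?mulr0.
Qed.

Lemma mpolyX_in_edge_ideal mu : edge_covered mu -> in_ideal edge_gens 'X_[mu].
Proof.
move=> /hasP[e he /andP[h1 h2]]; have hne := loopless he.
have -> : mu = ((mu - U_(e.1) - U_(e.2)) + (U_(e.1) + U_(e.2)))%MM.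
  apply/mnmP => k; rewrite !mnmDE !mnmBE !mnm1E.
  have [<-|n1] := eqVneq e.1 k.
    by rewrite ?eqxx eq_sym (negbTE hne) /=; move: h1; lia.
  rewrite ?(negbTE n1); have [<-|n2] := eqVneq e.2 k.
    by rewrite ?eqxx /=; move: h2; lia.
  by rewrite ?(negbTE n2) /=; lia.
rewrite !mpolyXD; apply: in_idealM; apply: in_ideal_mem.
exact: (map_f (fun e : 'I_n * 'I_n => 'X_e.1 * 'X_e.2) he).
Qed.

Lemma edge_covered_msupp f k mu :
  in_ideal edge_gens (f ^+ k) -> mu \in msupp f -> edge_covered mu.
Proof.
move=> hfk; apply: contraLR => uncov.
have := supp_subst_edge_ideal uncov hfk; rewrite rmorphXn /= => /eqP.
rewrite expf_eq0 => /andP[_ /eqP f_mu0].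
by rewrite -mcoeff_eq0 -(mcoeff_supp_subst mu) f_mu0 mcoeff0.
Qed.

Lemma in_edge_ideal f :
  (forall mu, mu \in msupp f -> edge_covered mu) -> in_ideal edge_gens f.
Proof.
move=> cov; rewrite [f]mpolyE big_seq; apply: in_ideal_sum => mu hmu.
by rewrite -mul_mpolyC; apply: in_idealM; apply: mpolyX_in_edge_ideal; apply: cov.
Qed.

Lemma edge_ideal_radical f : in_radical edge_gens f -> in_ideal edge_gens f.
Proof.
by move=> [k hk]; apply: in_edge_ideal => mu; apply: edge_covered_msupp hk.
Qed.

End EdgeIdeal.

Section Generators.
Variables (K : fieldType) (m : nat).
Local Notation N := (3 * m).+3.
Local Notation x := (xv K m).
Local Notation Ig := (I_gens K m).
Local Notation Jg := (J_gens K m).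

Lemma mem_J_gens n : n \in iota 1 m ->
  {subset [:: s_ K m n + t_ K m n; u_ K m n + v_ K m n] <= Jg}.
Proof.
move=> hn g hg; rewrite inE; apply/orP; right; apply/flattenP.
by exists [:: s_ K m n + t_ K m n; u_ K m n + v_ K m n]; first exact: map_f.
Qed.

Lemma mem_I_gens n : n \in iota 1 m ->
  {subset [:: s_ K m n; t_ K m n; u_ K m n; v_ K m n] <= Ig}.
Proof.
move=> hn g hg; rewrite inE; apply/orP; right; apply/flattenP.
by exists [:: s_ K m n; t_ K m n; u_ K m n; v_ K m n]; first exact: map_f.
Qed.

Lemma J_gens_in_I : {in Jg, forall g, in_ideal Ig g}.
Proof.
move=> g; rewrite inE => /orP[/eqP->|/flattenP[_ /mapP[n hn ->]]].
  by apply: in_ideal_mem; rewrite inE eqxx.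
by rewrite !inE => /orP[]/eqP->; apply: in_idealD; apply: in_ideal_mem;
  apply: (mem_I_gens hn); rewrite !inE eqxx ?orbT.
Qed.

Lemma radical_J_step n : n \in iota 1 m ->
  in_radical Jg (x (3 * n - 2) * x (3 * n - 1)) ->
  [/\ in_radical Jg (s_ K m n), in_radical Jg (t_ K m n),
      in_radical Jg (u_ K m n) & in_radical Jg (v_ K m n)].
Proof.
move=> hn hab; apply: in_radical_cross_terms hab _ _;
  apply: in_ideal_radical; apply: in_ideal_mem; apply: (mem_J_gens hn);
  by rewrite !inE eqxx ?orbT.
Qed.

Lemma radical_J_level n : (n <= m)%N ->
  in_radical Jg (x (3 * n + 1) * x (3 * n + 2)).
Proof.
elim: n => [|n IH] hn.
  by rewrite muln0; apply: in_ideal_radical; apply: in_ideal_mem; rewrite inE eqxx.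
have hn' : n.+1 \in iota 1 m by rewrite mem_iota; lia.
have e1 : (3 * n + 1 = 3 * n.+1 - 2)%N by lia.
have e2 : (3 * n + 2 = 3 * n.+1 - 1)%N by lia.
by have := IH (ltnW hn); rewrite e1 e2 => /(radical_J_step hn') [].
Qed.

Lemma I_gens_in_radical_J : {in Ig, forall g, in_radical Jg g}.
Proof.
move=> g; rewrite inE => /orP[/eqP->|/flattenP[_ /mapP[n hn ->]]].
  by have := radical_J_level (leq0n m); rewrite muln0.
have hn1 : (1 <= n <= m)%N by move: hn; rewrite mem_iota; lia.
have e1 : (3 * n - 2 = 3 * n.-1 + 1)%N by lia.
have e2 : (3 * n - 1 = 3 * n.-1 + 2)%N by lia.
have := radical_J_level (n := n.-1) ltac:(lia).
rewrite -e1 -e2 => /(radical_J_step hn) [hs ht hu hv].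
by rewrite !inE => /or4P[] /eqP->.
Qed.

Definition var (j : nat) : 'I_N := inord j.-1.

Definition I_edges : seq ('I_N * 'I_N) :=
  (var 1, var 2) :: flatten [seq [:: (var (3*n-2), var (3*n+2));
                                     (var (3*n+1), var (3*n+3));
                                     (var (3*n+1), var (3*n+2));
                                     (var (3*n-1), var (3*n+3))] | n <- iota 1 m].

Lemma I_gens_edges : Ig = edge_gens K I_edges.
Proof. by rewrite /I_gens /edge_gens /= map_flatten -map_comp. Qed.

Lemma I_edges_loopless : {in I_edges, forall e, e.1 != e.2}.
Proof.
have var_neq a b : (0 < a <= N)%N -> (0 < b <= N)%N -> a != b -> var a != var b.
  by move=> ha hb /eqP hab; apply/eqP => /(congr1 val); rewrite /= !inordK; lia.
move=> e; rewrite inE => /orP[/eqP->|/flattenP[_ /mapP[n hn ->]]].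
  by apply: var_neq; lia.
have hn1 : (1 <= n <= m)%N by move: hn; rewrite mem_iota; lia.
by rewrite !inE => /or4P[] /eqP-> /=; apply: var_neq; lia.
Qed.

End Generators.

Theorem mainTheorem6 (K : fieldType) (m : nat) (hm : (2 <= m)%N) :
  forall f : Rm K m, in_ideal (I_gens K m) f <-> in_radical (J_gens K m) f.
Proof.
move=> f; split; first exact/in_radical_of_ideal/I_gens_in_radical_J.
have J_rad_I : {in J_gens K m, forall g, in_radical (I_gens K m) g}.
  by move=> g /J_gens_in_I /in_ideal_radical.
move=> /(in_radical_trans J_rad_I); rewrite I_gens_edges => rad_I.
exact: edge_ideal_radical (@I_edges_loopless m) _ rad_I.
Qed.
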